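(* Let $l\ge 1$. For each $n\in[1,\infty]$ let $Y^n=\{Y^n_z:z\in\mathbb Z^2\}$ be a collection of Bernoulli random variables which is $l$-dependent, i.e. $\{Y^n_z:z\in A\}$ and $\{Y^n_z:z\in B\}$ are independent whenever $d_\infty(A,B)=\min\{|z-z'|_\infty:z\in A,z'\in B\}\ge l$. Let $\phi=\inf_{n}\inf_{z\in\mathbb Z^2}\mathbb P(Y^n_z=1)$. Then there exists $p_0\in(0,1)$ (depending on $l$) such that if $\phi>p_0$, then for every $k\ge1$ there exist $b_3,b_4>0$ such that for all $n\in[1,\infty]$ and all $s\ge 1$, $$\mathbb P(m^k_s(Y^n)<b_3 s)\le e^{-b_4 s}.$$
   Context: A lattice animal is a connected (nearest-neighbour) finite subset of $\mathbb Z^2$ containing the origin; $\Phi_s$ is the set of lattice animals with at least $s$ sites. For an animal $A$ and $k\ge1$, $\Xi^k_A$ is the set of subsets $B\subseteq A$ such that $|z-\bar z|_\infty\ge k$ for all distinct $z,\bar z\in B$. Define $m^k(A,Y^n)=\max\{\sum_{z\in B}Y^n_z:B\in\Xi^k_A\}$ and $m^k_s(Y^n)=\min\{m^k(A,Y^n):A\in\Phi_s\}$. *)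

From HB Require Import structures.
From mathcomp Require Import all_boot all_order all_algebra.
From mathcomp Require Import finmap.
From mathcomp Require Import all_classical all_reals all_analysis.
Set Implicit Arguments. Unset Strict Implicit. Unset Printing Implicit Defensive.
Import Order.TTheory GRing.Theory Num.Theory.
Local Open Scope classical_set_scope.
Local Open Scope ring_scope.

Definition site := (int * int)%type.

Definition distI (z w : site) : nat := maxn `|z.1 - w.1|%N `|z.2 - w.2|%N.

Definition adjacent (z w : site) : bool := (`|z.1 - w.1|%N + `|z.2 - w.2|%N == 1)%N.

Definition lattice_animal (A : {fset site}) : Prop :=
  ((0, 0) : site) \in A /\
  forall x y, x \in A -> y \in A ->
    exists p : seq site, [/\ path adjacent x p, last x p = y & all (fun z => z \in A) p].

Definition Phi {R : realType} (s : R) : set {fset site} :=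
  [set A | lattice_animal A /\ s <= (#|` A|%fset)%:R].

Definition sepb (k : nat) (B : {fset site}) : bool :=
  all (fun z => all (fun w => (z == w) || (k <= distI z w)%N) (enum_fset B)) (enum_fset B).

Definition Xi (k : nat) (A : {fset site}) : set {fset site} :=
  [set B | fsubset B A /\ sepb k B].

Definition mk (k : nat) (A : {fset site}) (y : site -> bool) : nat :=
  (\max_(B <- enum_fset (fpowerset A) | sepb k B) \sum_(z <- enum_fset B) (y z : nat))%N.

(* m^k_s(y) = min over A in Phi_s of m^k(A, y) (an infimum of naturals, attained) *)
Definition mks {R : realType} (k : nat) (s : R) (y : site -> bool) : R :=
  inf [set (mk k A y)%:R | A in Phi s].

Definition cyl {T : Type} (Y : site -> T -> bool) (S : seq site) (v : site -> bool) : set T :=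
  [set w | forall z, z \in S -> Y z w = v z].

(* l-dependence: the families {Y_z : z in A} and {Y_z : z in B} are independent
   whenever d_oo(A,B) >= l; independence of the two families is expressed via
   their finite-dimensional distributions (product rule on joint cylinder events). *)
Definition l_dependent {R : realType} {d : measure_display} {T : measurableType d}
  (P : probability T R) (l : nat) (Y : site -> T -> bool) : Prop :=
  forall A B : set site,
    (forall z w, A z -> B w -> (l <= distI z w)%N) ->
    forall (SA SB : seq site) (vA vB : site -> bool),
      (forall z, z \in SA -> A z) -> (forall z, z \in SB -> B z) ->
      P (cyl Y SA vA `&` cyl Y SB vB) = (P (cyl Y SA vA) * P (cyl Y SB vB))%E.

From Pilot Require Import Defs.
From HB Require Import structures.
From mathcomp Require Import all_boot all_order all_algebra.
From mathcomp Require Import finmap.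
From mathcomp Require Import all_classical all_reals all_analysis.
From mathcomp Require Import zify ring lra.
Import Order.TTheory GRing.Theory Num.Theory.
Local Open Scope classical_set_scope.
Local Open Scope ring_scope.

(* An animal with at least s sites contains a sub-animal with exactly M = ceil s
   sites that is the set of sites of a walk of length 2(M-1) from the origin:
   grow it one neighbouring site at a time, paying a detour of two steps for each
   new site.  As m^k is monotone in the animal, m^k_s(Y) < b s forces m^k(V, Y) < b s
   for one of at most 16^M such sets V.
   For a fixed V, colouring Z^2 by residues mod k gives m^k(V, Y) >= #{z in V | Y_z}/k^2,
   and colouring by residues mod l gives an l-separated S in V with |V| <= l^2 |S|.
   By l-dependence the Y_z, z in S, are independent, so with P(Y_z = 0) <= q = 64^(-2l^2)
   the probability that fewer than half of them are 1 is at most 2^|S| q^(|S|/2)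
   <= 32^(-|V|).  The union bound gives 16^M 32^(-M) = 2^(-M) <= e^(-s ln 2). *)

(** * Walks and lattice animals *)

(* [adjacent] alone would refer to the notation of [sequences]. *)
Local Notation adj := Defs.adjacent.

Definition origin : site := (0, 0).

Definition unit_step (d : 'I_4) : site :=
  match val d with 0 => (1, 0) | 1 => (-1, 0) | 2 => (0, 1) | _ => (0, -1) end.

Definition step (z : site) (d : 'I_4) : site :=
  (z.1 + (unit_step d).1, z.2 + (unit_step d).2).

Lemma adj_sym : symmetric adj.
Proof. by move=> a b; rewrite /Defs.adjacent; apply/idP/idP => /eqP H; apply/eqP; lia. Qed.

Lemma adj_step (z : site) (d : 'I_4) : adj z (step z d).
Proof. by rewrite /Defs.adjacent /step; case: d => [[|[|[|[|m]]]] Hm] //=; lia. Qed.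

Lemma adj_stepP {a b : site} : adj a b -> exists d, step a d = b.
Proof.
case: a b => [a1 a2] [b1 b2]; rewrite /Defs.adjacent /= => /eqP H.
have : (b1 = a1 + 1 /\ b2 = a2) \/ (b1 = a1 - 1 /\ b2 = a2) \/
       (b1 = a1 /\ b2 = a2 + 1) \/ (b1 = a1 /\ b2 = a2 - 1) by lia.
case=> [[-> ->]|[[-> ->]|[[-> ->]|[-> ->]]]].
- by exists (@Ordinal 4 0 isT); rewrite /step /= addr0.
- by exists (@Ordinal 4 1 isT); rewrite /step /= addr0.
- by exists (@Ordinal 4 2 isT); rewrite /step /= addr0.
- by exists (@Ordinal 4 3 isT); rewrite /step /= addr0.
Qed.

Lemma path_scanl_step (x : site) (w : seq 'I_4) : path adj x (scanl step x w).
Proof. by elim: w x => [|d w IH] x //=; rewrite adj_step IH. Qed.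

Lemma path_exit (T : eqType) (e : rel T) (P : pred T) (u : T) (p : seq T) :
  path e u p -> P u -> ~~ P (last u p) ->
  exists a b, [/\ P a, ~~ P b, e a b & b \in p].
Proof.
elim: p u => [|v p IH] u /=; first by move=> _ ->.
move=> /andP [euv hp] Pu; case Pv: (P v) => Plast.
- have [a [b [Pa Pb eab bp]]] := IH v hp Pv Plast.
  by exists a, b; rewrite in_cons bp orbT.
- by exists u, v; rewrite Pv in_cons eqxx.
Qed.

Lemma lattice_animal_from_origin (A : {fset site}) :
  origin \in A ->
  (forall x, x \in A -> exists p,
     [/\ path adj origin p, last origin p = x & all (fun z => z \in A) p]) ->
  lattice_animal A.
Proof.
move=> A0 reach; split => // x y xA yA.
have [p [p_path p_last pA]] := reach x xA.
have [q [q_path q_last qA]] := reach y yA.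
have back_last : last x (rev (belast origin p)) = origin.
  by rewrite -p_last; case: p {p_path p_last pA} => //= z p; rewrite rev_cons last_rcons.
exists (rev (belast origin p) ++ q); split.
- rewrite cat_path back_last q_path andbT -p_last rev_path.
  by apply: sub_path p_path => a b; rewrite adj_sym.
- by rewrite last_cat back_last.
- rewrite all_cat qA andbT all_rev; apply/allP => z /mem_belast.
  by rewrite inE => /predU1P [->|/(allP pA)].
Qed.

Definition walk_sites (w : seq 'I_4) : seq site := origin :: scanl step origin w.

Definition walk_set (w : seq 'I_4) : {fset site} := [fset z in walk_sites w]%fset.

Lemma walk_set_animal (w : seq 'I_4) : lattice_animal (walk_set w).
Proof.
apply: lattice_animal_from_origin => [|x]; first by rewrite in_fset mem_head.
rewrite in_fset inE => /predU1P [->|xw]; first by exists [::].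
have := path_scanl_step origin w; rewrite /walk_set /walk_sites.
case/splitPr: xw => p1 p2; rewrite cat_path /= => /and3P [p1_path adj_x _].
exists (rcons p1 x); rewrite rcons_path last_rcons p1_path adj_x; split => //.
apply/allP => z; rewrite mem_rcons in_cons in_fset /= in_cons mem_cat in_cons.
by case/orP => ->; rewrite !orbT.
Qed.

Lemma foldl_step_take (w : seq 'I_4) (i : nat) : (i <= size w)%N ->
  foldl step origin (take i w) = nth origin (walk_sites w) i.
Proof. by case: i => [|i] i_le; rewrite ?take0 //= nth_scanl. Qed.

Lemma walk_sites_detour {w : seq 'I_4} {a b : site} :
  a \in walk_sites w -> adj a b ->
  exists w', size w' = (size w).+2 /\ walk_sites w' =i b :: walk_sites w.
Proof.
move=> aw ab; set i := index a (walk_sites w).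
have [d ad] := adj_stepP ab.
have [d' bd'] : exists d', step b d' = a by apply: adj_stepP; rewrite adj_sym.
have i_le : (i <= size w)%N.
  by move: aw; rewrite -index_mem /walk_sites /= size_scanl.
have at_i : foldl step origin (take i w) = a by rewrite foldl_step_take ?nth_index.
have sitesE : walk_sites w =
    origin :: scanl step origin (take i w) ++ scanl step a (drop i w).
  by rewrite /walk_sites -{1}(cat_take_drop i w) scanl_cat at_i.
exists (take i w ++ d :: d' :: drop i w); split.
  by rewrite size_cat /= size_take size_drop; case: ltnP; lia.
move=> z; rewrite [in RHS]sitesE /walk_sites scanl_cat at_i /= ad bd'.
rewrite !(in_cons, mem_cat); case: (eqVneq z a) => [->|_].
  by move: aw; rewrite sitesE !(in_cons, mem_cat) => ->; rewrite !orbT.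
by rewrite orFb; case: (z == b); rewrite ?orbT.
Qed.

Lemma animal_walk_subset {n : nat} {A : {fset site}} :
  lattice_animal A -> (n < #|`A|)%N ->
  exists w, [/\ size w = (2 * n)%N, fsubset (walk_set w) A & #|`walk_set w| = n.+1].
Proof.
case=> A0 A_conn; elim: n => [|n IH] nA.
  have sites0 : walk_set [::] = [fset origin]%fset.
    by apply/fsetP => z; rewrite in_fset1 in_fset /= in_cons orbF.
  exists [::]; rewrite sites0 cardfs1 fsub1set; split => //.
have [w [w_size wA w_card]] := IH (ltnW nA).
have [x xA xw] : exists2 x, x \in A & x \notin walk_set w.
  by apply/fsubsetPn; apply/negP => /fsubset_leq_card; rewrite w_card; lia.
have [p [p_path p_last pA]] := A_conn _ _ A0 xA.
have origin_w : origin \in walk_set w by rewrite in_fset mem_head.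
have last_w : last origin p \notin walk_set w by rewrite p_last.
have [a [b [aw bw ab bp]]] :=
  @path_exit _ _ (fun z => z \in walk_set w) _ _ p_path origin_w last_w.
rewrite in_fset in aw; have [w' [w'_size w'_sites]] := walk_sites_detour aw ab.
have w'E : walk_set w' = (b |` walk_set w)%fset.
  by apply/fsetP => z; rewrite in_fset1U !in_fset /= w'_sites in_cons.
exists w'; rewrite w'E; split.
- by rewrite w'_size w_size; lia.
- by rewrite fsubUset fsub1set wA (allP pA).
- by rewrite cardfsU1 bw w_card.
Qed.

Definition east : 'I_4 := @Ordinal 4 0 isT.

Lemma scanl_east (a n : nat) :
  scanl step (a%:Z, 0) (nseq n east) = [seq (i%:Z, 0) : site | i <- iota a.+1 n].
Proof.
elim: n a => [|n IH] a //=.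
have -> : step (a%:Z, 0) east = (a.+1%:Z, 0) by rewrite /step /= addr0 -addn1 PoszD.
by rewrite IH.
Qed.

Lemma walk_set_large (n : nat) : exists w, (n.+1 <= #|`walk_set w|)%N.
Proof.
exists (nseq n east); rewrite /walk_set card_fseq undup_id.
  by rewrite /walk_sites /= size_scanl size_nseq.
rewrite /walk_sites -[origin]/((0%N%:Z, 0) : site) scanl_east.
rewrite -[X in uniq X]/([seq (i%:Z, 0) : site | i <- iota 0 n.+1]).
by rewrite map_inj_uniq ?iota_uniq // => i j [].
Qed.

(** * Separated sets, m^k and m^k_s *)

Definition separated (k : nat) (S : seq site) : Prop :=
  {in S &, forall z w, z != w -> (k <= distI z w)%N}.

Lemma sepbP (k : nat) (B : {fset site}) : reflect (separated k (enum_fset B)) (sepb k B).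
Proof.
apply: (iffP allP) => [sepB z w zB wB zw | sepB z zB].
  by move/allP: (sepB z zB) => /(_ w wB); rewrite (negbTE zw).
by apply/allP => w wB; case: eqVneq => //= zw; apply: sepB.
Qed.

Lemma sum_nat_of_bool (T : Type) (y : T -> bool) (s : seq T) :
  (\sum_(z <- s) (y z : nat))%N = count y s.
Proof. by elim: s => [|x s IH]; rewrite ?big_nil ?big_cons ?IH. Qed.

Lemma count_le_mk (k : nat) (A B : {fset site}) (y : site -> bool) :
  fsubset B A -> sepb k B -> (count y (enum_fset B) <= mk k A y)%N.
Proof.
move=> BA sepB; rewrite -sum_nat_of_bool.
by apply: leq_bigmax_seq; rewrite ?fpowersetE.
Qed.

Lemma mk_subset (k : nat) (A A' : {fset site}) (y : site -> bool) :
  fsubset A A' -> (mk k A y <= mk k A' y)%N.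
Proof.
move=> AA'; apply/bigmax_leqP_seq => B; rewrite fpowersetE => BA sepB.
by rewrite sum_nat_of_bool count_le_mk // (fsubset_trans BA).
Qed.

Lemma eq_in_mk {k : nat} {A : {fset site}} {y y' : site -> bool} :
  {in A, y =1 y'} -> mk k A y = mk k A y'.
Proof.
move=> yy'; rewrite /mk big_seq_cond [RHS]big_seq_cond.
apply: eq_bigr => B /andP [+ _]; rewrite fpowersetE => /fsubsetP BA.
by rewrite !sum_nat_of_bool; apply: eq_in_count => z /BA /yy'.
Qed.

Definition residue (K : nat) (z : site) : 'I_K.+1 * 'I_K.+1 :=
  (inord `|(z.1 %% K.+1)%Z|, inord `|(z.2 %% K.+1)%Z|).

Lemma residue_dist {K : nat} {a b : int} :
  `|(a %% K.+1)%Z|%N = `|(b %% K.+1)%Z|%N -> a != b -> (K.+1 <= `|a - b|)%N.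
Proof.
move=> ab_mod ab.
have : (a %% K.+1)%Z = (b %% K.+1)%Z.
  by rewrite -(gez0_abs (@modz_ge0 a K.+1 isT)) -(gez0_abs (@modz_ge0 b K.+1 isT)) ab_mod.
move/eqP; rewrite eqz_mod_dvd dvdzE => /dvdn_leq; apply.
by rewrite absz_gt0 subr_eq0.
Qed.

Lemma residue_sep (K : nat) (z w : site) :
  residue K z = residue K w -> z != w -> (K.+1 <= distI z w)%N.
Proof.
have residue_lt (a : int) : (`|(a %% K.+1)%Z| < K.+1)%N.
  by rewrite -ltz_nat gez0_abs ?(@modz_ge0 a K.+1 isT) ?(@ltz_pmod a K.+1 isT).
case: z w => [z1 z2] [w1 w2] [/(congr1 val) e1 /(congr1 val) e2].
rewrite /= !inordK // in e1 e2; rewrite /distI leq_max /=.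
case: (eqVneq z1 w1) => [z1w1|n1] zw; last by rewrite (residue_dist e1).
by rewrite (residue_dist e2) ?orbT //; apply: contraNneq zw => ->; rewrite z1w1.
Qed.

Lemma separated_residue_class (K : nat) (c : 'I_K.+1 * 'I_K.+1) (s : seq site) :
  separated K.+1 [seq z <- s | residue K z == c].
Proof.
move=> z w; rewrite !mem_filter => /andP [/eqP zc _] /andP [/eqP wc _].
by apply: residue_sep; rewrite zc wc.
Qed.

Lemma count_partition {T : eqType} {C : finType} (f : T -> C) (P : pred T) (s : seq T) :
  count P s = (\sum_(c : C) count (fun z => P z && (f z == c)) s)%N.
Proof.
elim: s => [|x s IH] /=; first by rewrite big1.
rewrite big_split /= -IH (bigD1 (f x)) //= eqxx andbT big1 ?addn0 // => c cfx.
by rewrite eq_sym (negbTE cfx) andbF.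
Qed.

Lemma count_le_mk_mul (K : nat) (A : {fset site}) (y : site -> bool) :
  (count y (enum_fset A) <= K.+1 * K.+1 * mk K.+1 A y)%N.
Proof.
rewrite (count_partition (residue K)).
have -> : (K.+1 * K.+1 * mk K.+1 A y = \sum_(c : 'I_K.+1 * 'I_K.+1) mk K.+1 A y)%N.
  by rewrite sum_nat_const card_prod card_ord.
apply: leq_sum => c _; set s := [seq z <- enum_fset A | residue K z == c].
pose B := [fset z in s]%fset.
have BE : enum_fset B =i s by move=> z; rewrite -[z \in enum_fset B]/(z \in B) in_fset.
have -> : count (fun z => y z && (residue K z == c)) (enum_fset A) = count y (enum_fset B).
  by rewrite (permP (uniq_perm (fset_uniq _) (filter_uniq _ (fset_uniq _)) BE)) count_filter.
apply: count_le_mk.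
  by apply/fsubsetP => z; rewrite in_fset mem_filter => /andP [].
by apply/sepbP => z w; rewrite !BE; apply: separated_residue_class.
Qed.

Lemma separated_subseq (L : nat) {s : seq site} : uniq s ->
  exists S : seq site, [/\ uniq S, {subset S <= s}, separated L.+1 S &
                          (size s <= L.+1 * L.+1 * size S)%N].
Proof.
move=> s_uniq; pose class_size c := count (fun z => residue L z == c) s.
have [c _ c_max] := @arg_maxnP _ (ord0, ord0) predT class_size isT.
exists [seq z <- s | residue L z == c]; split.
- by rewrite filter_uniq.
- by move=> z; rewrite mem_filter => /andP [].
- exact: separated_residue_class.
rewrite size_filter -(count_predT s) (count_partition (residue L)).
have -> : (L.+1 * L.+1 * class_size c = \sum_(c' : 'I_L.+1 * 'I_L.+1) class_size c)%N.
  by rewrite sum_nat_const card_prod card_ord.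
by apply: leq_sum => c' _; apply: c_max.
Qed.

Lemma few_ones_of_small_mk {k l : nat} {V : {fset site}} {S : seq site} {y : site -> bool} :
  (0 < k)%N -> uniq S -> {subset S <= enum_fset V} -> (#|`V| <= l * l * size S)%N ->
  (2 * k * k * l * l * mk k V y < #|`V|)%N -> (2 * count y S < size S)%N.
Proof.
case: k => // K _ S_uniq SV V_le mk_small.
have count_S : (count y S <= count y (enum_fset V))%N.
  rewrite -!size_filter uniq_leq_size ?filter_uniq // => z.
  by rewrite !mem_filter => /andP [-> /SV].
have := count_le_mk_mul K V y; nia.
Qed.

Lemma least_nat_above {R : realType} (s : R) :
  exists M : nat, s <= M%:R /\ forall n : nat, s <= n%:R -> (M <= n)%N.
Proof.
have ex_above : exists n : nat, s <= n%:R by exists (Num.trunc s).+1; apply/ltW/truncnS_gt.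
by case: (ex_minnP ex_above) => M sM M_min; exists M.
Qed.

Lemma mks_lt_walk {R : realType} {k M : nat} {s t : R} {y : site -> bool} :
  s <= M%:R -> (forall n : nat, s <= n%:R -> (M <= n)%N) -> (0 < M)%N ->
  mks k s y < t <->
  exists w : (2 * M.-1).-tuple 'I_4, Phi s (walk_set w) /\ (mk k (walk_set w) y)%:R < t.
Proof.
move=> sM M_min M_gt0; split => [mks_lt|[w [Phi_w mk_lt]]]; last first.
  apply: le_lt_trans mk_lt; apply: ge_inf; last by exists (walk_set w).
  by exists 0 => _ [A _ <-]; exact: ler0n.
have [_ [A [A_animal sA] <-] mk_lt] : exists2 x, [set (mk k A y)%:R | A in Phi s] x & x < t.
  apply: inf_lt mks_lt; have [w w_large] := walk_set_large M.-1.
  exists (mk k (walk_set w) y)%:R, (walk_set w) => //; split; first exact: walk_set_animal.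
  by apply: le_trans sM _; rewrite ler_nat -(prednK M_gt0).
have M_le_A : (M.-1 < #|`A|)%N by rewrite prednK // M_min.
have [w [w_size wA w_card]] := animal_walk_subset A_animal M_le_A.
have w_tuple : size w == (2 * M.-1)%N by apply/eqP.
exists (Tuple w_tuple); split.
  by split; [exact: walk_set_animal | rewrite /= w_card prednK].
by apply: le_lt_trans mk_lt; rewrite ler_nat mk_subset.
Qed.

Lemma mks_lt_eq_bigsetU {R : realType} {T : Type} (Y : site -> T -> bool)
    {k M : nat} {s t : R} :
  s <= M%:R -> (forall n : nat, s <= n%:R -> (M <= n)%N) -> (0 < M)%N ->
  [set w | mks k s (Y^~ w) < t] =
  \big[setU/set0]_(v : (2 * M.-1).-tuple 'I_4 | `[< Phi s (walk_set v) >])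
    [set w | (mk k (walk_set v) (Y^~ w))%:R < t].
Proof.
move=> sM M_min M_gt0; rewrite -bigcup_seq_cond; apply/seteqP; split => w /=.
  move/(mks_lt_walk sM M_min M_gt0) => [v [Phi_v mk_lt]].
  by exists v; rewrite //= mem_index_enum asboolT.
move=> [v /andP [_ /asboolP Phi_v] mk_lt].
by apply/(mks_lt_walk sM M_min M_gt0); exists v.
Qed.

Lemma sum_few_ones_le (R : realFieldType) (q : R) (n N L : nat) :
  0 <= q -> q <= 64^-1 ^+ (2 * L) -> (n <= N)%N -> (N <= L * n)%N ->
  \sum_(m : n.-tuple bool | (n < 2 * count id m)%N) q ^+ count id m <= 32^-1 ^+ N.
Proof.
move=> q_ge0 q_le nN Nn.
have inv64_ge0 : (0 : R) <= 64^-1 by rewrite invr_ge0.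
have inv64_le1 : (64^-1 : R) <= 1 by rewrite invf_le1 ?ler1n ?ltr0n.
apply: (@le_trans _ _ (\sum_(m : n.-tuple bool | (n < 2 * count id m)%N) 64^-1 ^+ N)).
  apply: ler_sum => m many_ones; apply: le_trans (lerXn2r _ _ _ q_le) _.
  - by rewrite nnegrE.
  - by rewrite nnegrE exprn_ge0.
  by rewrite -exprM ler_wiXn2l //; nia.
rewrite sumr_const; apply: (@le_trans _ _ (64^-1 ^+ N *+ 2 ^ N)).
  apply: ler_wpMn2l; first exact: exprn_ge0.
  apply: leq_trans (max_card _) _; rewrite card_tuple card_bool leq_exp2l //.
by rewrite -mulr_natr natrX -exprMn (_ : 64^-1 * 2 = 32^-1 :> R) //; field.
Qed.

Lemma walk_count_bound (R : realType) (M : nat) (s : R) : s <= M%:R ->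
  (4 ^ (2 * M.-1))%:R * 32^-1 ^+ M <= expR (- (ln 2 * s)).
Proof.
move=> sM; apply: (@le_trans _ _ (expR (- (ln 2 * M%:R)))); last first.
  by rewrite ler_expR lerN2 ler_wpM2l // ltW // ln_gt0 // ltr1n.
rewrite -mulNr [_ * M%:R]mulrC expRM_natl expRN lnK ?posrE //.
apply: (@le_trans _ _ (16 ^+ M * 32^-1 ^+ M)).
  by rewrite ler_wpM2r ?exprn_ge0 ?invr_ge0 // -natrX ler_nat expnM leq_exp2l //; lia.
by rewrite -exprMn (_ : 16 * 32^-1 = 2^-1 :> R) //; field.
Qed.

(** * Probability estimates *)

Lemma measure_bigsetU_le {R : realType} {d : measure_display} {T : measurableType d}
    (mu : {measure set T -> \bar R}) {I : Type} (r : seq I) (P : pred I) (F : I -> set T) :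
  (forall i, measurable (F i)) ->
  (mu (\big[setU/set0]_(i <- r | P i) F i) <= \sum_(i <- r | P i) mu (F i))%E.
Proof.
move=> mF; elim: r => [|i r IH]; first by rewrite !big_nil measure0.
rewrite !big_cons; case: ifP => // _.
apply: le_trans (measureU2 _ _ _) _ => //; first exact: bigsetU_measurable.
exact: leeD.
Qed.

Section LocalEvents.
Context {d : measure_display} {T : measurableType d} {Y : site -> T -> bool}.
Hypothesis mY : forall z, measurable [set w | Y z w].

Lemma measurable_local (S : seq site) (g : (site -> bool) -> bool) :
  (forall y y', {in S, y =1 y'} -> g y = g y') ->
  measurable [set w | g (fun z => Y z w)].
Proof.
elim: S g => [|z S IH] g g_local.
  have -> : [set w | g (fun z => Y z w)] = if g xpredT then setT else set0.
    apply/seteqP; split => w /=; first by rewrite (g_local _ xpredT) // => ->.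
    by case: ifP => // gT _; rewrite (g_local _ xpredT).
  by case: (g _).
(* Once the value at [z] is fixed, the event is determined by [S] alone. *)
pose g_at b y := g (fun u => if u == z then b else y u).
have g_at_local b y y' : {in S, y =1 y'} -> g_at b y = g_at b y'.
  move=> yy'; apply: g_local => u; rewrite in_cons => /predU1P [->|uS].
    by rewrite eqxx.
  by case: eqP => // _; apply: yy'.
have -> : [set w | g (fun z => Y z w)] =
    ([set w | Y z w] `&` [set w | g_at true (fun z => Y z w)]) `|`
    (~` [set w | Y z w] `&` [set w | g_at false (fun z => Y z w)]).
  apply/seteqP; split => w /=; rewrite (g_local _ (fun u => if u == z then Y z w else Y u w));
    try by move=> u _; case: eqP => // ->.
  - by case: (Y z w) => ?; [left | right].
  - by case=> -[]; [move=> -> | move=> /negP/negbTE ->].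
apply: measurableU; apply: measurableI.
- exact: mY.
- exact: IH (g_at_local true).
- exact: measurableC (mY z).
- exact: IH (g_at_local false).
Qed.

Lemma measurable_cyl (S : seq site) (v : site -> bool) : measurable (cyl Y S v).
Proof.
have -> : cyl Y S v = [set w | all (fun z => Y z w == v z) S].
  apply/seteqP; split => w /=; first by move=> vS; apply/allP => z /vS ->.
  by move/allP => vS z /vS/eqP.
apply: (@measurable_local S (fun y => all (fun z => y z == v z) S)) => y y' yy'.
by apply: eq_in_all => z /yy' ->.
Qed.

End LocalEvents.

Lemma cyl1_zero_le (R : realType) (d : measure_display) (T : measurableType d)
    (P : probability T R) (Y : site -> T -> bool) (z : site) (q : R) :
  measurable [set w | Y z w] -> ((1 - q)%:E <= P [set w | Y z w])%E ->
  (P (cyl Y [:: z] xpred0) <= q%:E)%E.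
Proof.
move=> mYz Yz_large.
have -> : cyl Y [:: z] xpred0 = ~` [set w | Y z w].
  apply/seteqP; split => w /=; first by move/(_ z (mem_head _ _)) => ->.
  by move/negP/negbTE => Yzw u; rewrite mem_seq1 => /eqP ->.
rewrite probability_setC //; move: Yz_large (probability_le1 P mYz).
by case: (P _) => //= r; rewrite !lee_fin => ? ?; lra.
Qed.

Section LDependent.
Context {R : realType} {d : measure_display} {T : measurableType d}.
Context {P : probability T R} {l : nat} {Y : site -> T -> bool} {q : R}.
Hypotheses (mY : forall z, measurable [set w | Y z w]) (Y_dep : l_dependent P l Y).
Hypothesis zero_le : forall z, (P (cyl Y [:: z] xpred0) <= q%:E)%E.

Lemma cyl_zero_separated_le (S : seq site) :
  uniq S -> separated l S -> (P (cyl Y S xpred0) <= (q ^+ size S)%:E)%E.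
Proof.
elim: S => [|z S IH] /=.
  have -> : cyl Y [::] xpred0 = setT by apply/seteqP; split.
  by rewrite probability_setT.
move=> /andP [zS S_uniq] sep_zS.
have -> : cyl Y (z :: S) xpred0 = cyl Y [:: z] xpred0 `&` cyl Y S xpred0.
  apply/seteqP; split => w /=.
    by move=> Y0; split => u uS; apply: Y0; rewrite in_cons -?mem_seq1 uS ?orbT.
  move=> [Y0z Y0S] u; rewrite in_cons => /predU1P [->|]; last exact: Y0S.
  by apply: Y0z; rewrite mem_seq1.
rewrite (@Y_dep [set z] [set w | w \in S]) //; first last.
- by move=> u; rewrite mem_seq1 => /eqP.
- move=> _ w -> wS; apply: sep_zS; rewrite ?mem_head ?in_cons ?wS ?orbT //.
  by apply: contraNneq zS => ->.
rewrite exprS EFinM lee_pmul ?measure_ge0 //.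
by apply: IH => // a b aS bS; apply: sep_zS; rewrite in_cons ?aS ?bS orbT.
Qed.

Lemma few_ones_le (S : seq site) : uniq S -> separated l S ->
  (P [set w | (2 * count (Y^~ w) S < size S)%N] <=
   (\sum_(m : (size S).-tuple bool | (size S < 2 * count id m)%N) q ^+ count id m)%:E)%E.
Proof.
move=> S_uniq S_sep.
pose zeros_on (m : (size S).-tuple bool) := cyl Y (mask m S) xpred0.
have m_zeros m : measurable (zeros_on m) by apply: measurable_cyl.
apply: (@le_trans _ _ (P (\big[setU/set0]_(m : (size S).-tuple bool |
                             (size S < 2 * count id m)%N) zeros_on m))).
  apply: le_measure; rewrite ?inE.
  - apply: (measurable_local mY S (fun y => (2 * count y S < size S)%N)) => y y' yy'.
    by rewrite (eq_in_count yy').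
  - exact: bigsetU_measurable.
  move=> w /= few; rewrite -bigcup_seq_cond.
  exists (map_tuple (fun z => ~~ Y z w) (in_tuple S)); last first.
    by move=> z; rewrite -filter_mask mem_filter => /andP []; case: (Y z w).
  rewrite /= mem_index_enum count_map.
  have -> : count (preim (fun z => ~~ Y z w) id) S = (size S - count (Y^~ w) S)%N.
    by rewrite -(count_predC (Y^~ w) S) addKn.
  by move: few; lia.
apply: le_trans (measure_bigsetU_le _ _ _ _ m_zeros) _.
rewrite -sumEFin; apply: lee_sum => m _.
rewrite -[in X in q ^+ X](@size_mask _ m S) ?size_tuple //.
apply: cyl_zero_separated_le; first exact: mask_uniq.
by move=> z w /mem_mask zS /mem_mask wS; apply: S_sep.
Qed.

Lemma small_mk_prob_le {k : nat} {s : R} {V : {fset site}} :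
  (0 < k)%N -> (0 < l)%N -> q <= 64^-1 ^+ (2 * l * l) -> s <= #|`V|%:R ->
  (P [set w | ((mk k V (Y^~ w))%:R < (2 * k * k * l * l)%:R^-1 * s)%R] <=
   (32^-1 ^+ #|`V|)%:E)%E.
Proof.
move=> k_gt0 l_gt0 q_small sV.
have [S [S_uniq SV S_sep V_le]] := separated_subseq l.-1 (fset_uniq V).
rewrite prednK // in S_sep V_le.
have q_ge0 : 0 <= q by rewrite -lee_fin (le_trans _ (zero_le origin)).
apply: (@le_trans _ _ (P [set w | (2 * count (Y^~ w) S < size S)%N])); last first.
  apply: le_trans (few_ones_le S S_uniq S_sep) _.
  rewrite lee_fin (@sum_few_ones_le _ _ _ _ (l * l)) ?mulnA ?uniq_leq_size //.
apply: le_measure; rewrite ?inE.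
- apply: (measurable_local mY (enum_fset V)
    (fun y => (mk k V y)%:R < (2 * k * k * l * l)%:R^-1 * s)) => y y' yy'.
  by rewrite (eq_in_mk yy').
- apply: (measurable_local mY S (fun y => (2 * count y S < size S)%N)) => y y' yy'.
  by rewrite (eq_in_count yy').
move=> w /=; rewrite ltr_pdivlMl ?ltr0n ?muln_gt0 ?k_gt0 ?l_gt0 // => mk_small.
apply: (few_ones_of_small_mk k_gt0 S_uniq SV V_le).
by rewrite -(ltr_nat R) natrM (lt_le_trans mk_small sV).
Qed.

Lemma mks_small_prob_le {k : nat} {s : R} :
  (0 < k)%N -> (0 < l)%N -> q <= 64^-1 ^+ (2 * l * l) -> 1 <= s ->
  (P [set w | (mks k s (Y^~ w) < (2 * k * k * l * l)%:R^-1 * s)%R] <=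
   (expR (- (ln 2 * s)))%:E)%E.
Proof.
move=> k_gt0 l_gt0 q_small s_ge1.
have [M [sM M_min]] := least_nat_above s.
have M_gt0 : (0 < M)%N by rewrite -(ltr_nat R); lra.
rewrite (mks_lt_eq_bigsetU _ sM M_min M_gt0).
apply: le_trans; first apply: measure_bigsetU_le => v.
  apply: (measurable_local mY (walk_set v)
    (fun y => (mk k (walk_set v) y)%:R < (2 * k * k * l * l)%:R^-1 * s)) => y y' yy'.
  by rewrite (eq_in_mk yy').
apply: (@le_trans _ _ (\sum_(v : (2 * M.-1).-tuple 'I_4) (32^-1 ^+ M)%:E)).
  rewrite big_mkcond /=; apply: lee_sum => v _.
  case: asboolP => [[_ sv]|_]; last by rewrite lee_fin exprn_ge0 // invr_ge0.
  apply: le_trans (small_mk_prob_le k_gt0 l_gt0 q_small sv) _.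
  by rewrite lee_fin ler_wiXn2l ?invr_ge0 ?invf_le1 ?ler1n ?ltr0n ?M_min.
rewrite sumEFin lee_fin sumr_const card_tuple card_ord.
by rewrite -[_ *+ _]mulr_natl walk_count_bound.
Qed.

End LDependent.

Theorem lemma2p4 (R : realType) (l : nat) (hl : (1 <= l)%N) :
  exists p0 : R, 0 < p0 < 1 /\
  forall (d : measure_display) (T : measurableType d) (P : probability T R)
         (I : Type) (Y : I -> site -> T -> bool),
    (forall n z, measurable [set w | Y n z w]) ->
    (forall n, l_dependent P l (Y n)) ->
    (p0%:E < ereal_inf (range (fun nz : I * site => P [set w | Y nz.1 nz.2 w])))%E ->
    forall k : nat, (1 <= k)%N ->
      exists b3 b4 : R, 0 < b3 /\ 0 < b4 /\
        forall (n : I) (s : R), 1 <= s ->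
          (P [set w | (mks k s (fun z => Y n z w) < b3 * s)%R]
             <= (expR (- (b4 * s)))%:E)%E.
Proof.
pose q0 : R := 64^-1 ^+ (2 * l * l).
have q0_gt0 : 0 < q0 by rewrite exprn_gt0 // invr_gt0.
have q0_lt1 : q0 < 1 by rewrite exprn_ilt1 ?invr_ge0 ?invf_lt1 ?ltr0n ?ltr1n //; lia.
exists (1 - q0); split; first by apply/andP; split; lra.
move=> d T P I Y mY Y_dep P_large k k_gt0.
exists (2 * k * k * l * l)%:R^-1, (ln 2); split.
  by rewrite invr_gt0 ltr0n !muln_gt0 k_gt0 hl.
split=> [|n s s_ge1]; first by rewrite ln_gt0 // ltr1n.
have zero_le z : (P (cyl (Y n) [:: z] xpred0) <= q0%:E)%E.
  apply: cyl1_zero_le => //; apply/ltW/(lt_le_trans P_large).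
  by apply: ereal_inf_lbound; exists (n, z).
exact: (mks_small_prob_le (mY n) (Y_dep n) zero_le k_gt0 hl (lexx _) s_ge1).
Qed.
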